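(* Let $(\Gamma,\rho)$ be a voltage graph with $\Gamma$ strongly connected and $G$ a finite group. Then for any two vertices $v_i,v_j$ of $\Gamma$, $\mathrm{Net}(v_i,v_j)=\mathrm{Net}^*(v_i,v_j)$.
   Context: $\Gamma=(V,E)$ is a simple digraph, $e_{ij}$ the edge $v_i\to v_j$; a voltage graph is $(\Gamma,\rho)$ with $\rho:E\to G$, $G$ finite with identity $\mathbf 1$. A semi-walk from $v_{i_1}$ to $v_{i_n}$ is $w=v_{i_1}a_1\dots a_{n-1}v_{i_n}$ where each $a_j$ is either $e_{i_ji_{j+1}}$ or $e_{i_{j+1}i_j}$; it is a walk if every $a_j=e_{i_ji_{j+1}}$ (a single vertex is a trivial walk). Net voltage: $f(w)=\bar\rho(a_1)\cdots\bar\rho(a_{n-1})$, $\bar\rho(a_j)=\rho(a_j)$ if $a_j=e_{i_ji_{j+1}}$, else $\rho(a_j)^{-1}$; $f$ of a trivial semi-walk is $\mathbf 1$. $\mathrm{Net}(v_i,v_j)=\{f(w): w$ semi-walk from $v_i$ to $v_j\}$ and $\mathrm{Net}^*(v_i,v_j)=\{f(w): w$ walk from $v_i$ to $v_j\}$. $\Gamma$ is strongly connected if for every ordered pair of distinct vertices there is a walk (path) from the first to the second. *)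

From mathcomp Require Import all_boot all_fingroup.
Set Implicit Arguments. Unset Strict Implicit. Unset Printing Implicit Defensive.
Local Open Scope group_scope.

(* A simple digraph on a finite vertex type V: an irreflexive edge relation
   E (E u w means the edge u -> w exists; at most one edge per ordered pair).
   A voltage assignment is rho : V -> V -> gT, read only on edges:
   rho u w is the voltage of the edge e_{uw}. *)
Definition simple_digraph (V : finType) (E : rel V) : Prop := irreflexive E.

(* A semi-walk starting at u is given by its list of steps; a step (w, b)
   goes from the current vertex x to w, along the edge e_{xw} if b = true
   (forward) and along the edge e_{wx} backwards if b = false. *)
Fixpoint semiwalk_ok (V : finType) (E : rel V) (x : V) (s : seq (V * bool)) : bool :=
  match s with
  | [::] => true
  | (w, b) :: s' => (if b then E x w else E w x) && semiwalk_ok E w s'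
  end.

Definition is_walk (V : finType) (s : seq (V * bool)) : bool := all (fun p => p.2) s.

Definition walk_end (V : finType) (x : V) (s : seq (V * bool)) : V := last x (map fst s).

Fixpoint net_voltage (V : finType) (gT : finGroupType) (rho : V -> V -> gT)
    (x : V) (s : seq (V * bool)) : gT :=
  match s with
  | [::] => 1
  | (w, b) :: s' => (if b then rho x w else (rho w x)^-1) * net_voltage rho w s'
  end.

Definition Net (V : finType) (gT : finGroupType) (E : rel V) (rho : V -> V -> gT)
    (u v : V) (g : gT) : Prop :=
  exists s, [/\ semiwalk_ok E u s, walk_end u s = v & net_voltage rho u s = g].

Definition NetStar (V : finType) (gT : finGroupType) (E : rel V) (rho : V -> V -> gT)
    (u v : V) (g : gT) : Prop :=
  exists s, [/\ semiwalk_ok E u s, is_walk s, walk_end u s = v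
               & net_voltage rho u s = g].

Definition strongly_connected (V : finType) (E : rel V) : Prop :=
  forall u v : V, u != v ->
    exists s, [/\ semiwalk_ok E u s, is_walk s & walk_end u s = v].

From mathcomp Require Import all_boot all_fingroup.
Set Implicit Arguments. Unset Strict Implicit. Unset Printing Implicit Defensive.
Local Open Scope group_scope.

(* Walk voltages from a vertex to itself are closed under products, hence, G
   being finite, under inverses (g^-1 = g ^+ #[g].-1).  A backward step along
   e_{wx} is replaced by a walk P from x to w: closing P with the edge e_{wx}
   gives a closed walk at w of voltage c = rho w x * f(P), and P followed by a
   walk of voltage c^-1 has voltage rho w x ^-1.  Induction on the semi-walk
   then replaces every backward step. *)

Section WalkVoltages.
Variables (V : finType) (gT : finGroupType) (E : rel V) (rho : V -> V -> gT).
Implicit Types (x y z : V) (s t : seq (V * bool)).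

Lemma semiwalk_ok_cat x s t :
  semiwalk_ok E x (s ++ t) = semiwalk_ok E x s && semiwalk_ok E (walk_end x s) t.
Proof. by elim: s x => [|[w b] s IHs] x //=; rewrite IHs andbA. Qed.

Lemma is_walk_cat s t : is_walk (s ++ t) = is_walk s && is_walk t.
Proof. exact: all_cat. Qed.

Lemma walk_end_cat x s t : walk_end x (s ++ t) = walk_end (walk_end x s) t.
Proof. by rewrite /walk_end map_cat last_cat. Qed.

Lemma net_voltage_cat x s t :
  net_voltage rho x (s ++ t) = net_voltage rho x s * net_voltage rho (walk_end x s) t.
Proof. by elim: s x => [|[w b] s IHs] x /=; rewrite ?mul1g // IHs mulgA. Qed.

Lemma NetStar_refl x : NetStar E rho x x 1.
Proof. by exists [::]. Qed.

Lemma NetStar_edge x y : E x y -> NetStar E rho x y (rho x y).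
Proof. by move=> Exy; exists [:: (y, true)]; rewrite /= Exy mulg1. Qed.

Lemma NetStar_trans x y z g h :
  NetStar E rho x y g -> NetStar E rho y z h -> NetStar E rho x z (g * h).
Proof.
move=> [s [oks ws ends nets]] [t [okt wt endt nett]].
exists (s ++ t); rewrite semiwalk_ok_cat is_walk_cat walk_end_cat net_voltage_cat.
by rewrite ends oks ws okt wt endt nets nett.
Qed.

Lemma NetStar_expg x g k : NetStar E rho x x g -> NetStar E rho x x (g ^+ k).
Proof.
move=> cycle_g; elim: k => [|k IHk]; first exact: NetStar_refl.
by rewrite expgS; apply: NetStar_trans cycle_g IHk.
Qed.

Lemma NetStar_invg x g : NetStar E rho x x g -> NetStar E rho x x g^-1.
Proof.
have -> : g^-1 = g ^+ #[g].-1.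
  by apply/eqP; rewrite eq_invg_mul -expgS prednK ?order_gt0 ?expg_order.
exact: NetStar_expg.
Qed.

Lemma NetStar_connected x y :
  strongly_connected E -> x != y -> exists p, NetStar E rho x y p.
Proof.
move=> connE neq_xy; have [s [oks ws ends]] := connE x y neq_xy.
by exists (net_voltage rho x s), s.
Qed.

Lemma NetStar_reverse_edge x y :
  simple_digraph E -> strongly_connected E -> E y x ->
  NetStar E rho x y (rho y x)^-1.
Proof.
move=> irrE connE Eyx.
have neq_xy : x != y by apply: contraTneq Eyx => ->; rewrite irrE.
have [p walk_p] := NetStar_connected connE neq_xy.
have cycle_y := NetStar_trans (NetStar_edge Eyx) walk_p.
have := NetStar_trans walk_p (NetStar_invg cycle_y).
by rewrite invMg mulgA mulgV mul1g.
Qed.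

Lemma Net_NetStar x y g :
  simple_digraph E -> strongly_connected E ->
  Net E rho x y g -> NetStar E rho x y g.
Proof.
move=> irrE connE [s [oks ends <-]]; rewrite -{}ends.
elim: s x oks => [|[w b] s IHs] x /=; first by move=> _; exact: NetStar_refl.
case/andP=> step oks; apply: NetStar_trans (IHs w oks).
by case: b step => [/NetStar_edge|/(NetStar_reverse_edge irrE connE)].
Qed.

Lemma NetStar_Net x y g : NetStar E rho x y g -> Net E rho x y g.
Proof. by move=> [s [oks _ ends nets]]; exists s. Qed.

End WalkVoltages.

Theorem theorem1 (V : finType) (gT : finGroupType) (E : rel V)
    (rho : V -> V -> gT) :
  simple_digraph E -> strongly_connected E ->
  forall (vi vj : V) (g : gT), Net E rho vi vj g <-> NetStar E rho vi vj g.
Proof.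
move=> irrE connE vi vj g; split; first exact: Net_NetStar.
exact: NetStar_Net.
Qed.
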